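(* For the discrete scheme described in the context (any $n\ge1$, $\delta t>0$): (i) $z\mapsto\theta^n(t,z)$ is nondecreasing for every $t\in[0,T)$; (ii) with $\hat\theta^n(t,z)=\theta^n(t,F^n(t,z))$ and $\hat q^n(t,z)=q^n(t,F^n(t,z))$, one has $\hat\theta^n(t,z)+\hat q^n(t,z)=\theta^n_0(z)+q^n_0(z)$; (iii) $t\mapsto\hat\theta^n(t,z)$ is nondecreasing for every $z\in[0,1)$; (iv) $q^n(t,z)\le Q^{sat}(\theta^n(t,z),z,k\delta t)$, where $k$ is the integer with $k\delta t\le t<(k+1)\delta t$.
   Context: $Q^{sat}:\mathbb{R}^3\to\mathbb{R}$ is smooth with $\partial_\theta Q^{sat}>0$, $\partial_zQ^{sat}<0$. $\Theta(w,z,t)$ is the solution $\theta$ of $\theta+Q^{sat}(\theta,z,t)=w$ (assumed well defined), with $\partial_w\Theta>0$, $\partial_z\Theta>0$. Discrete scheme. Fix $T>0$, $n\ge1$, $\delta t>0$, $z_i=i/n$, $J_i=[\frac{i-1}{n},\frac in)$. There are $n$ parcels $j=1,\dots,n$; initially parcel $j$ is at position $j$ with value $\theta^n_j$, where $\theta^n_1\le\dots\le\theta^n_n$ and $q^n_j\le Q^{sat}(\theta^n_j,z_j,0)$; parcel $j$ carries the fixed number $\theta^M_j=\theta^n_j+q^n_j$. One time step from $k\delta t$ to $(k+1)\delta t$, with $\tau=(k+1)\delta t$: positions $m=n,\dots,1$ are processed in this order. At stage $m$, with current configuration (parcel $p(i)$ at position $i$ with value $\vartheta_i$), position $i$ is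 wet if $\vartheta_i<\Theta(\theta^M_{p(i)},z_i,\tau)$; a wet position $i_0\le m$ is eligible if for every $i$ with $i_0<i\le m$, either $i$ is not wet and $\vartheta_i<\Theta(\theta^M_{p(i_0)},z_i,\tau)$, or $i$ is wet and $\theta^M_{p(i_0)}>\theta^M_{p(i)}$. If some position is eligible, let $i_*$ be the eligible position whose parcel has the largest $\theta^M$ (largest position in case of ties); that parcel moves to position $m$ with new value $\Theta(\theta^M_{p(i_* )},z_m,\tau)$, the parcels at $i_*+1,\dots,m$ move down one position keeping their values, others unchanged; otherwise nothing changes. After stage $1$ one has the configuration at time $(k+1)\delta t$. Let $\alpha_{k\delta t}(j)$ be the position of parcel $j$ after $k$ steps, $\theta^n_i(k\delta t)$ the value at position $i$, and $q^n_i(k\delta t)=\theta^M_p-\theta^n_i(k\delta t)$, $p$ the parcel at position $i$. For $k\delta t\le t<(k+1)\delta t$ and $z\in J_j$: $\theta^n(t,z)=\theta^n_j(k\delta t)$, $q^n(t,z)=q^n_j(k\delta t)$, $F^n(t,z)=z-z_j+z_{\alpha_{k\delta t}(j)}$, $\theta^n_0(z)=\theta^n_j$, $q^n_0(z)=q^n_j$. *)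

From Stdlib Require Import Reals List ZArith Lia Lra.
Open Scope R_scope.

Definition cont3 (f : R -> R -> R -> R) : Prop :=
  forall x y z eps, 0 < eps -> exists del, 0 < del /\
    forall x' y' z', Rabs (x' - x) < del -> Rabs (y' - y) < del -> Rabs (z' - z) < del ->
      Rabs (f x' y' z' - f x y z) < eps.

Definition pderiv3 (i : nat) (f g : R -> R -> R -> R) : Prop :=
  forall x y z,
    match i with
    | O => derivable_pt_lim (fun a => f a y z) x (g x y z)
    | 1%nat => derivable_pt_lim (fun a => f x a z) y (g x y z)
    | _ => derivable_pt_lim (fun a => f x y a) z (g x y z)
    end.

Fixpoint Ck3 (k : nat) (f : R -> R -> R -> R) : Prop :=
  cont3 f /\
  match k with
  | O => True
  | S k' => forall i, (i < 3)%nat -> exists g, pderiv3 i f g /\ Ck3 k' g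
  end.

Definition smooth3 (f : R -> R -> R -> R) : Prop := forall k, Ck3 k f.

Definition zpos (n : nat) (i : nat) : R := INR i / INR n.

(* a configuration: par i = parcel at position i, val i = value at position i *)
Record config := mkConfig { par : nat -> nat ; val : nat -> R }.

Definition thM (th0 q0 : nat -> R) (j : nat) : R := th0 j + q0 j.

Definition Rltb (x y : R) : bool := if Rlt_dec x y then true else false.
Definition Rleb (x y : R) : bool := if Rle_dec x y then true else false.

Definition wetb n (Th : R -> R -> R -> R) (M : nat -> R) (tau : R) (c : config) (i : nat) : bool :=
  Rltb (val c i) (Th (M (par c i)) (zpos n i) tau).

Definition eligb n Th M tau (c : config) (m i0 : nat) : bool :=
  (1 <=? i0)%nat && (i0 <=? m)%nat && wetb n Th M tau c i0 &&
  forallb (fun i => if wetb n Th M tau c i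
                    then Rltb (M (par c i)) (M (par c i0))
                    else Rltb (val c i) (Th (M (par c i0)) (zpos n i) tau))
          (List.seq (S i0) (m - i0)).

Definition select n Th M tau (c : config) (m : nat) : option nat :=
  fold_left (fun best i =>
     if eligb n Th M tau c m i then
       match best with
       | None => Some i
       | Some b => if Rleb (M (par c b)) (M (par c i)) then Some i else best
       end
     else best) (List.seq 1 m) None.

Definition move n (Th : R -> R -> R -> R) (M : nat -> R) tau (c : config) (m s : nat) : config :=
  mkConfig
    (fun i => if (i <? s)%nat then par c i
              else if (i <? m)%nat then par c (S i)
              else if (i =? m)%nat then par c s
              else par c i)
    (fun i => if (i <? s)%nat then val c i
              else if (i <? m)%nat then val c (S i)
              else if (i =? m)%nat then Th (M (par c s)) (zpos n m) tau
              else val c i).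

Definition stage n Th M tau (c : config) (m : nat) : config :=
  match select n Th M tau c m with
  | Some s => move n Th M tau c m s
  | None => c
  end.

Fixpoint stages n Th M tau (m : nat) (c : config) : config :=
  match m with
  | O => c
  | S m' => stages n Th M tau m' (stage n Th M tau c (S m'))
  end.

(* one time step, with tau = (k+1) dt *)
Definition step n Th M tau (c : config) : config := stages n Th M tau n c.

Definition init_config (th0 : nat -> R) : config := mkConfig (fun i => i) th0.

Fixpoint cfg n (Th : R -> R -> R -> R) (th0 q0 : nat -> R) (dt : R) (k : nat) : config :=
  match k with
  | O => init_config th0
  | S k' => step n Th (thM th0 q0) (INR k * dt) (cfg n Th th0 q0 dt k')
  end.

Definition alpha (n : nat) (c : config) (j : nat) : nat :=
  match List.find (fun i => (par c i =? j)%nat) (List.seq 1 n) with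
  | Some i => i
  | None => O
  end.

Definition tidx (dt t : R) : nat := Z.to_nat (Int_part (t / dt)).
(* j with z in J_j = [(j-1)/n, j/n) *)
Definition zidx (n : nat) (z : R) : nat := S (Z.to_nat (Int_part (z * INR n))).

Definition thetan n Th th0 q0 dt (t z : R) : R :=
  val (cfg n Th th0 q0 dt (tidx dt t)) (zidx n z).

Definition qn n Th th0 q0 dt (t z : R) : R :=
  let c := cfg n Th th0 q0 dt (tidx dt t) in
  thM th0 q0 (par c (zidx n z)) - val c (zidx n z).

Definition Fn n Th th0 q0 dt (t z : R) : R :=
  let j := zidx n z in
  z - zpos n j + zpos n (alpha n (cfg n Th th0 q0 dt (tidx dt t)) j).

Definition theta0 n (th0 : nat -> R) (z : R) : R := th0 (zidx n z).
Definition q0f n (q0 : nat -> R) (z : R) : R := q0 (zidx n z).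

Definition thetahat n Th th0 q0 dt (t z : R) : R :=
  thetan n Th th0 q0 dt t (Fn n Th th0 q0 dt t z).
Definition qhat n Th th0 q0 dt (t z : R) : R :=
  qn n Th th0 q0 dt t (Fn n Th th0 q0 dt t z).

From Stdlib Require Import Reals List ZArith Lia Lra Bool ClassicalEpsilon.
Open Scope R_scope.

(* All four properties are invariants of one time step. A parcel only moves up, to a
   position [m], where it takes the saturated value; it was wet, so this raises its
   value (iii), and afterwards position [m] is dry and stays so during the later stages,
   which gives (iv), while (ii) holds because a parcel keeps its [theta^M]. The
   values stay sorted (i): what lay between the old and new positions of the moved parcel
   was below its new value, and whatever parcel can move to [m - 1] at the next stage
   has [theta^M] at most that of the parcel selected for [m], as otherwise it would
   have been selected instead. *)

Lemma nondecreasing_of_pos_derivative (f : R -> R) :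
  (forall x, exists d, derivable_pt_lim f x d /\ 0 < d) ->
  forall x y, x <= y -> f x <= f y.
Proof.
  intros Hf.
  assert (pr : derivable f).
  { intro x. destruct (constructive_indefinite_description _ (Hf x)) as [d [Hd _]].
    exact (exist _ d Hd). }
  intros x y Hxy. destruct (Rle_lt_or_eq_dec _ _ Hxy) as [Hlt|<-]; [|lra].
  apply (derive_increasing_interv_var (x - 1) (y + 1) f pr); try lra.
  intros t _. destruct (Hf t) as [d [Hd Hpos]].
  rewrite (derive_pt_eq_0 f t d (pr t) Hd). lra.
Qed.

Lemma nonincreasing_of_neg_derivative (f : R -> R) :
  (forall x, exists d, derivable_pt_lim f x d /\ d < 0) ->
  forall x y, x <= y -> f y <= f x.
Proof.
  intros Hf x y Hxy.
  assert (Hopp : forall x, exists d, derivable_pt_lim (- f)%F x d /\ 0 < d).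
  { intro a. destruct (Hf a) as [d [Hd Hneg]].
    exists (- d). split; [apply derivable_pt_lim_opp; exact Hd | lra]. }
  pose proof (nondecreasing_of_pos_derivative _ Hopp x y Hxy) as H.
  unfold opp_fct in H. lra.
Qed.

Lemma Int_part_le (r r' : R) : r <= r' -> (Int_part r <= Int_part r')%Z.
Proof.
  intros H. destruct (base_Int_part r) as [B1 _]. destruct (base_Int_part r') as [_ B2].
  assert (Hlt : IZR (Int_part r) < IZR (Int_part r' + 1)) by (rewrite plus_IZR; lra).
  apply lt_IZR in Hlt. lia.
Qed.

Lemma Rltb_true x y : Rltb x y = true <-> x < y.
Proof. unfold Rltb; destruct (Rlt_dec x y); split; congruence || tauto. Qed.

Lemma Rleb_true x y : Rleb x y = true <-> x <= y.
Proof. unfold Rleb; destruct (Rle_dec x y); split; congruence || tauto. Qed.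

Definition argmax_step (e : nat -> bool) (f : nat -> R) (best : option nat) (i : nat) :
  option nat :=
  if e i then
    match best with
    | None => Some i
    | Some b => if Rleb (f b) (f i) then Some i else best
    end
  else best.

Definition argmax_spec (e : nat -> bool) (f : nat -> R) (l : list nat) (r : option nat) :
  Prop :=
  match r with
  | None => forall i, In i l -> e i = false
  | Some s => e s = true /\ forall i, In i l -> e i = true -> f i <= f s
  end.

Lemma fold_argmax_spec e f l : argmax_spec e f l (fold_left (argmax_step e f) l None).
Proof.
  induction l as [|a l IH] using rev_ind; [intros i []|].
  rewrite fold_left_app. simpl.
  destruct (fold_left (argmax_step e f) l None) as [b|] eqn:Eb;
    unfold argmax_step; destruct (e a) eqn:Ea; simpl in IH |- *.
  - destruct IH as [Eb' IH]. destruct (Rleb (f b) (f a)) eqn:Hle;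
      [apply Rleb_true in Hle | assert (~ f b <= f a) by (rewrite <- Rleb_true; congruence)];
      (split; [assumption|]); intros i Hi Ei; apply in_app_or in Hi as [Hi|[<-|[]]];
      try (specialize (IH i Hi Ei)); lra.
  - destruct IH as [Eb' IH]. split; [assumption|].
    intros i Hi Ei. apply in_app_or in Hi as [Hi|[<-|[]]]; [auto|congruence].
  - split; [exact Ea|]. intros i Hi Ei.
    apply in_app_or in Hi as [Hi|[<-|[]]]; [rewrite IH in Ei; congruence | lra].
  - intros i Hi. apply in_app_or in Hi as [Hi|[<-|[]]]; auto.
Qed.

Lemma zpos_le n i j : (i <= j)%nat -> zpos n i <= zpos n j.
Proof.
  intros H. unfold zpos, Rdiv. apply Rmult_le_compat_r; [|apply le_INR; exact H].
  destruct n as [|n]; [simpl; rewrite Rinv_0; lra|].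
  left. apply Rinv_0_lt_compat, lt_0_INR. lia.
Qed.

Definition bij_on (n : nat) (f : nat -> nat) : Prop :=
  (forall i, (1 <= i <= n)%nat -> (1 <= f i <= n)%nat) /\
  (forall i j, (1 <= i <= n)%nat -> (1 <= j <= n)%nat -> f i = f j -> i = j) /\
  (forall j, (1 <= j <= n)%nat -> exists i, (1 <= i <= n)%nat /\ f i = j).

Lemma bij_on_comp n f g : bij_on n f -> bij_on n g -> bij_on n (fun i => f (g i)).
Proof.
  intros [F1 [F2 F3]] [G1 [G2 G3]]. split; [auto | split; [auto |]].
  intros k Hk. destruct (F3 k Hk) as [j [Hj <-]]. destruct (G3 j Hj) as [i [Hi <-]].
  exists i. auto.
Qed.

Lemma bij_on_ext n f g : (forall i, f i = g i) -> bij_on n f -> bij_on n g.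
Proof.
  intros E [F1 [F2 F3]]. split; [|split].
  - intros i. rewrite <- E. auto.
  - intros i j. rewrite <- !E. auto.
  - intros j Hj. destruct (F3 j Hj) as [i [Hi <-]]. exists i. auto.
Qed.

Ltac case_nat :=
  repeat match goal with
  | |- context [Nat.ltb ?a ?b] => destruct (Nat.ltb_spec a b)
  | |- context [Nat.eqb ?a ?b] => destruct (Nat.eqb_spec a b)
  end.

(* Position [i] of [move c m s] holds what position [move_index s m i] of [c] held. *)
Definition move_index (s m i : nat) : nat :=
  if (i <? s)%nat then i else if (i <? m)%nat then S i else if (i =? m)%nat then s else i.

Lemma move_index_at s m : (s <= m)%nat -> move_index s m m = s.
Proof. intros H. unfold move_index. case_nat; lia. Qed.

Lemma move_index_le s m i j : (s <= m)%nat -> i <> m -> j <> m -> (i <= j)%nat ->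
  (move_index s m i <= move_index s m j)%nat.
Proof. intros. unfold move_index. case_nat; lia. Qed.

Lemma move_index_ge s m i : i <> m -> (i <= move_index s m i)%nat.
Proof. intros. unfold move_index. case_nat; lia. Qed.

Lemma move_index_above s m i : (m < i)%nat -> move_index s m i = i.
Proof. intros. unfold move_index. case_nat; lia. Qed.

Lemma move_index_below s m i : (i < m)%nat -> (move_index s m i <= m)%nat.
Proof. intros. unfold move_index. case_nat; lia. Qed.

Lemma bij_on_move_index n s m : (1 <= s)%nat -> (s <= m <= n)%nat ->
  bij_on n (move_index s m).
Proof.
  intros Hs Hm. split; [|split].
  - intros i Hi. unfold move_index. case_nat; lia.
  - intros i j Hi Hj. unfold move_index. case_nat; lia.
  - intros j Hj.
    destruct (Nat.ltb_spec j s); [exists j|].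
    + split; [exact Hj|]. unfold move_index. case_nat; lia.
    + destruct (Nat.eqb_spec j s); [exists m|].
      * split; [lia|]. unfold move_index. case_nat; lia.
      * destruct (Nat.leb_spec j m); [exists (pred j)|exists j];
          (split; [lia|]); unfold move_index; case_nat; lia.
Qed.

Lemma move_index_preimage s m p i : (1 <= s <= S m)%nat -> (p <= m)%nat ->
  (move_index s (S m) p < i <= S m)%nat -> i <> s ->
  exists i0, (p < i0 <= m)%nat /\ (i0 <= i)%nat /\ move_index s (S m) i0 = i.
Proof.
  intros Hs Hp. unfold move_index at 1. case_nat; try lia; intros Hi Hne;
    destruct (Nat.ltb_spec i s); [exists i| exists (pred i) | exists i | exists (pred i)];
    (split; [lia|split; [lia|]]); unfold move_index; case_nat; lia.
Qed.

Section Stage.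
Variables (n : nat) (Th : R -> R -> R -> R) (M : nat -> R) (tau : R).
Hypothesis Th_mono_w : forall w w' z t, w <= w' -> Th w z t <= Th w' z t.
Hypothesis Th_mono_z : forall w z z' t, z <= z' -> Th w z t <= Th w z' t.

Definition wet (c : config) (i : nat) : Prop := val c i < Th (M (par c i)) (zpos n i) tau.

Definition passable (c : config) (p i : nat) : Prop :=
  (wet c i -> M (par c i) < M (par c p)) /\
  (~ wet c i -> val c i < Th (M (par c p)) (zpos n i) tau).

Definition eligible (c : config) (m p : nat) : Prop :=
  (1 <= p <= m)%nat /\ wet c p /\ forall i, (p < i <= m)%nat -> passable c p i.

Lemma wetb_true c i : wetb n Th M tau c i = true <-> wet c i.
Proof. apply Rltb_true. Qed.

Lemma eligb_true c m p : eligb n Th M tau c m p = true <-> eligible c m p.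
Proof.
  assert (Hcond : forall i,
    (if wetb n Th M tau c i then Rltb (M (par c i)) (M (par c p))
     else Rltb (val c i) (Th (M (par c p)) (zpos n i) tau)) = true <-> passable c p i).
  { intros i. unfold passable. rewrite <- wetb_true.
    destruct (wetb n Th M tau c i); rewrite Rltb_true; intuition congruence. }
  unfold eligb, eligible. rewrite !andb_true_iff, !Nat.leb_le, forallb_forall, wetb_true.
  split.
  - intros [[[H1 H2] Hw] Hp]. split; [lia|split; [exact Hw|]].
    intros x Hx. apply Hcond, Hp, in_seq. lia.
  - intros [[H1 H2] [Hw Hp]]. split; [split; [split; lia|exact Hw]|].
    intros x Hx. apply in_seq in Hx. apply Hcond, Hp. lia.
Qed.

Lemma select_some c m s : select n Th M tau c m = Some s ->
  eligible c m s /\ forall p, eligible c m p -> M (par c p) <= M (par c s).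
Proof.
  intros Hs.
  pose proof (fold_argmax_spec (eligb n Th M tau c m) (fun i => M (par c i)) (seq 1 m)) as H.
  change (argmax_spec (eligb n Th M tau c m) (fun i => M (par c i)) (seq 1 m)
            (select n Th M tau c m)) in H.
  rewrite Hs in H. destruct H as [Es Hmax]. rewrite eligb_true in Es.
  split; [exact Es|]. intros p Hp. apply Hmax; [apply in_seq | apply eligb_true]; auto.
  destruct Hp as [Hp _]. lia.
Qed.

Lemma select_none c m : select n Th M tau c m = None -> forall p, ~ eligible c m p.
Proof.
  intros Hs p Hp.
  pose proof (fold_argmax_spec (eligb n Th M tau c m) (fun i => M (par c i)) (seq 1 m)) as H.
  change (argmax_spec (eligb n Th M tau c m) (fun i => M (par c i)) (seq 1 m)
            (select n Th M tau c m)) in H.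
  rewrite Hs in H. apply eligb_true in Hp as Ep. rewrite H in Ep; [discriminate|].
  apply in_seq. destruct Hp as [Hp _]. lia.
Qed.

Lemma eligible_last c m : (1 <= m)%nat -> wet c m -> eligible c m m.
Proof. intros Hm Hw. repeat split; auto; lia. Qed.

Lemma eligible_extend c m p : eligible c m p -> passable c p (S m) -> eligible c (S m) p.
Proof.
  intros [Hp [Hw Hpass]] Hlast. split; [lia|split; [exact Hw|]].
  intros i Hi. destruct (Nat.eq_dec i (S m)) as [->|]; [exact Hlast | apply Hpass; lia].
Qed.

Lemma wet_later c c' i i' : par c i = par c' i' -> val c i = val c' i' -> (i <= i')%nat ->
  wet c i -> wet c' i'.
Proof.
  unfold wet. intros <- <- Hi Hw. eapply Rlt_le_trans; [exact Hw|].
  apply Th_mono_z, zpos_le, Hi.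
Qed.

Lemma passable_later c c' p p' i i' :
  par c i = par c' i' -> val c i = val c' i' -> par c p = par c' p' -> (i <= i')%nat ->
  passable c p i -> passable c' p' i'.
Proof.
  unfold passable, wet. intros <- <- <- Hi [Hwet Hdry].
  assert (Hz := zpos_le n _ _ Hi).
  assert (Tp := Th_mono_z (M (par c p)) _ _ tau Hz).
  assert (Ti := Th_mono_z (M (par c i)) _ _ tau Hz).
  split; intros Hw'.
  - destruct (Rlt_dec (val c i) (Th (M (par c i)) (zpos n i) tau)) as [Hw|Hd]; [auto|].
    apply Hdry in Hd. destruct (Rlt_dec (M (par c i)) (M (par c p))) as [|Hge]; [assumption|].
    assert (Th_mono := Th_mono_w (M (par c p)) (M (par c i)) (zpos n i) tau).
    lra.
  - assert (Hd : ~ val c i < Th (M (par c i)) (zpos n i) tau) by lra.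
    apply Hdry in Hd. lra.
Qed.

Lemma eligible_val_last c m s : eligible c m s ->
  val c m < Th (M (par c s)) (zpos n m) tau.
Proof.
  intros [Hs [Hw Hpass]]. destruct (Nat.eq_dec s m) as [<-|Hne]; [exact Hw|].
  destruct (Hpass m) as [Hwet Hdry]; [lia|].
  destruct (Rlt_dec (val c m) (Th (M (par c m)) (zpos n m) tau)) as [Hwm|Hd]; [|auto].
  eapply Rlt_le_trans; [exact Hwm|]. apply Th_mono_w. left. auto.
Qed.

Lemma par_move c m s i : par (move n Th M tau c m s) i = par c (move_index s m i).
Proof. unfold move, move_index; simpl. case_nat; subst; reflexivity. Qed.

Lemma val_move c m s i : i <> m -> val (move n Th M tau c m s) i = val c (move_index s m i).
Proof. intros. unfold move, move_index; simpl. case_nat; solve [reflexivity | lia]. Qed.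

Lemma val_move_at c m s : (s <= m)%nat ->
  val (move n Th M tau c m s) m = Th (M (par c s)) (zpos n m) tau.
Proof. intros. unfold move; simpl. case_nat; solve [reflexivity | lia]. Qed.

Definition sorted_vals (c : config) : Prop :=
  forall i, (1 <= i)%nat -> (i < n)%nat -> val c i <= val c (S i).

Definition rises (c c' : config) : Prop :=
  forall i, (1 <= i <= n)%nat ->
    exists i', (1 <= i' <= n)%nat /\ par c' i' = par c i /\ val c i <= val c' i'.

(* What stage [m] needs from stage [m + 1] to keep the values sorted. *)
Definition eligible_bounded (m : nat) (c : config) : Prop :=
  (m < n)%nat -> forall p, eligible c m p -> Th (M (par c p)) (zpos n m) tau <= val c (S m).

Lemma sorted_le c : sorted_vals c ->
  forall i j, (1 <= i)%nat -> (i <= j)%nat -> (j <= n)%nat -> val c i <= val c j.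
Proof.
  intros Hsort i j Hi Hij Hj. induction Hij as [|j Hij IH]; [lra|].
  eapply Rle_trans; [apply IH; lia | apply Hsort; lia].
Qed.

Lemma bij_on_move c m s : bij_on n (par c) -> (1 <= s)%nat -> (s <= m <= n)%nat ->
  bij_on n (par (move n Th M tau c m s)).
Proof.
  intros Hc Hs Hm. apply (bij_on_ext n (fun i => par c (move_index s m i))).
  - intros i. symmetry. apply par_move.
  - apply bij_on_comp; [exact Hc | apply bij_on_move_index; assumption].
Qed.

Lemma rises_move c m s : wet c s -> (1 <= s)%nat -> (s <= m <= n)%nat ->
  rises c (move n Th M tau c m s).
Proof.
  intros Hw Hs Hm i Hi.
  destruct (bij_on_move_index n s m Hs Hm) as [_ [_ Hsurj]].
  destruct (Hsurj i Hi) as [i' [Hi' <-]]. exists i'. split; [exact Hi'|].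
  rewrite par_move. split; [reflexivity|].
  destruct (Nat.eq_dec i' m) as [->|Hne]; [|rewrite val_move by exact Hne; lra].
  rewrite val_move_at, move_index_at by lia. left.
  eapply Rlt_le_trans; [exact Hw|]. apply Th_mono_z, zpos_le. lia.
Qed.

Lemma sorted_move c m s : sorted_vals c -> (1 <= s)%nat -> (s <= m <= n)%nat ->
  val c m <= Th (M (par c s)) (zpos n m) tau ->
  ((m < n)%nat -> Th (M (par c s)) (zpos n m) tau <= val c (S m)) ->
  sorted_vals (move n Th M tau c m s).
Proof.
  intros Hsort Hs Hm Hlast Hnext i Hi Hin.
  destruct (bij_on_move_index n s m Hs Hm) as [Hrange _].
  destruct (Nat.eq_dec i m) as [->|Him].
  - rewrite val_move_at, val_move, move_index_above by lia. auto.
  - destruct (Nat.eq_dec (S i) m) as [<-|Hsim].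
    + rewrite val_move_at, val_move by lia. eapply Rle_trans; [|exact Hlast].
      apply sorted_le; [exact Hsort| apply Hrange; lia | apply move_index_below; lia | lia].
    + rewrite !val_move by lia.
      apply sorted_le; [exact Hsort | apply Hrange; lia | apply move_index_le; lia |].
      apply Hrange; lia.
Qed.

Lemma eligible_move_back c m s p : eligible c (S m) s ->
  eligible (move n Th M tau c (S m) s) m p ->
  M (par c s) < M (par c (move_index s (S m) p)) ->
  eligible c (S m) (move_index s (S m) p).
Proof.
  intros [Hs [Hws _]] [Hp [Hwp Hpass]] Hlt.
  assert (Hpq := move_index_ge s (S m) p ltac:(lia)).
  assert (Hq := move_index_below s (S m) p ltac:(lia)).
  split; [lia|split].
  - refine (wet_later _ c p _ _ _ Hpq Hwp); [apply par_move | apply val_move; lia].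
  - intros i Hi. destruct (Nat.eq_dec i s) as [->|Hne].
    + split; [intros _; exact Hlt | intros Hd; contradiction].
    + destruct (move_index_preimage s m p i ltac:(lia) ltac:(lia) Hi Hne)
        as [i0 [Hi0 [Hle <-]]].
      refine (passable_later _ c p _ i0 _ _ _ _ Hle (Hpass i0 Hi0));
        [apply par_move | apply val_move; lia | apply par_move].
Qed.

Lemma stage_above c m i : (m < i)%nat ->
  par (stage n Th M tau c m) i = par c i /\ val (stage n Th M tau c m) i = val c i.
Proof.
  intros Hi. unfold stage. destruct (select n Th M tau c m) as [s|] eqn:Hs; [|auto].
  destruct (select_some c m s Hs) as [[Hsm _] _].
  rewrite par_move, val_move, move_index_above by lia. auto.
Qed.

Lemma stages_above m : forall c i, (m < i)%nat ->
  par (stages n Th M tau m c) i = par c i /\ val (stages n Th M tau m c) i = val c i.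
Proof.
  induction m as [|m IH]; intros c i Hi; simpl; [auto|].
  destruct (IH (stage n Th M tau c (S m)) i) as [-> ->]; [lia|].
  apply stage_above. lia.
Qed.

Lemma stage_dry_last c m : (1 <= m)%nat -> ~ wet (stage n Th M tau c m) m.
Proof.
  intros Hm. unfold stage. destruct (select n Th M tau c m) as [s|] eqn:Hs.
  - destruct (select_some c m s Hs) as [[Hsm _] _].
    unfold wet. rewrite par_move, val_move_at, move_index_at by lia. lra.
  - intros Hw. exact (select_none c m Hs m (eligible_last c m Hm Hw)).
Qed.

Lemma stages_dry m : forall c i, (1 <= i <= m)%nat -> ~ wet (stages n Th M tau m c) i.
Proof.
  induction m as [|m IH]; intros c i Hi; [lia|]. simpl.
  destruct (Nat.eq_dec i (S m)) as [->|Hne]; [|apply IH; lia].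
  destruct (stages_above m (stage n Th M tau c (S m)) (S m)) as [Hpar Hval]; [lia|].
  intros Hw. apply (stage_dry_last c (S m)); [lia|].
  exact (wet_later _ _ _ _ Hpar Hval (le_n _) Hw).
Qed.

Lemma bij_on_stages m : forall c, bij_on n (par c) -> (m <= n)%nat ->
  bij_on n (par (stages n Th M tau m c)).
Proof.
  induction m as [|m IH]; intros c Hc Hm; simpl; [exact Hc|].
  apply IH; [|lia]. unfold stage.
  destruct (select n Th M tau c (S m)) as [s|] eqn:Hs; [|exact Hc].
  destruct (select_some c (S m) s Hs) as [[Hsm _] _].
  apply bij_on_move; [exact Hc | lia | lia].
Qed.

Lemma rises_trans c1 c2 c3 : rises c1 c2 -> rises c2 c3 -> rises c1 c3.
Proof.
  intros H12 H23 i Hi. destruct (H12 i Hi) as [i2 [Hi2 [E2 V2]]].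
  destruct (H23 i2 Hi2) as [i3 [Hi3 [E3 V3]]].
  exists i3. split; [exact Hi3|]. split; [congruence|lra].
Qed.

Lemma rises_refl c : rises c c.
Proof. intros i Hi. exists i. split; [exact Hi|]. split; [reflexivity|lra]. Qed.

Lemma rises_stages m : forall c, (m <= n)%nat -> rises c (stages n Th M tau m c).
Proof.
  induction m as [|m IH]; intros c Hm; simpl; [apply rises_refl|].
  apply (rises_trans _ (stage n Th M tau c (S m))); [|apply IH; lia].
  unfold stage. destruct (select n Th M tau c (S m)) as [s|] eqn:Hs; [|apply rises_refl].
  destruct (select_some c (S m) s Hs) as [[Hsm [Hw _]] _].
  apply rises_move; [exact Hw | lia | lia].
Qed.

Lemma sorted_stage c m : sorted_vals c -> eligible_bounded m c -> (1 <= m <= n)%nat ->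
  sorted_vals (stage n Th M tau c m).
Proof.
  intros Hsort Hbound Hm. unfold stage.
  destruct (select n Th M tau c m) as [s|] eqn:Hs; [|exact Hsort].
  destruct (select_some c m s Hs) as [Es _]. assert (Hsm := proj1 Es).
  apply sorted_move; [exact Hsort | lia | lia | |].
  - left. apply eligible_val_last, Es.
  - intros Hmn. apply Hbound; assumption.
Qed.

Lemma eligible_bounded_stage c m : (S m <= n)%nat ->
  eligible_bounded m (stage n Th M tau c (S m)).
Proof.
  intros Hmn _ p. unfold stage. destruct (select n Th M tau c (S m)) as [s|] eqn:Hs.
  - destruct (select_some c (S m) s Hs) as [Es Hmax]. intros Ep.
    assert (Hsm := proj1 Es).
    rewrite val_move_at, par_move by lia.
    assert (Hle : M (par c (move_index s (S m) p)) <= M (par c s)).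
    (* otherwise that parcel would have been selected instead of [s] *)
    { destruct (Rle_dec (M (par c (move_index s (S m) p))) (M (par c s))) as [|Hgt];
        [assumption|].
      apply Hmax, eligible_move_back; [exact Es | exact Ep | lra]. }
    eapply Rle_trans; [apply Th_mono_w, Hle|]. apply Th_mono_z, zpos_le. lia.
  - intros Ep. assert (Hsm := proj1 Ep).
    assert (Hdry : ~ wet c (S m)).
    { intros Hw. exact (select_none c (S m) Hs (S m) (eligible_last c (S m) ltac:(lia) Hw)). }
    destruct (Rlt_dec (val c (S m)) (Th (M (par c p)) (zpos n (S m)) tau)) as [Hlt|Hge].
    + exfalso. apply (select_none c (S m) Hs p), eligible_extend; [exact Ep|].
      split; [intros Hw; contradiction | intros _; exact Hlt].
    + apply Rle_trans with (Th (M (par c p)) (zpos n (S m)) tau); [|lra].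
      apply Th_mono_z, zpos_le. lia.
Qed.

Lemma sorted_stages m : forall c, (m <= n)%nat -> sorted_vals c -> eligible_bounded m c ->
  sorted_vals (stages n Th M tau m c).
Proof.
  induction m as [|m IH]; intros c Hm Hsort Hbound; simpl; [exact Hsort|].
  apply IH; [lia | apply sorted_stage; auto; lia | apply eligible_bounded_stage; lia].
Qed.

End Stage.

Lemma alpha_par n c i : bij_on n (par c) -> (1 <= i <= n)%nat -> alpha n c (par c i) = i.
Proof.
  intros [_ [Hinj _]] Hi. unfold alpha.
  destruct (find (fun x => (par c x =? par c i)%nat) (seq 1 n)) as [x|] eqn:E.
  - apply find_some in E as [Hx Ex]. apply in_seq in Hx. apply Nat.eqb_eq in Ex.
    apply Hinj; [lia | exact Hi | exact Ex].
  - pose proof (find_none _ _ E i) as Ei. cbv beta in Ei. rewrite Nat.eqb_refl in Ei.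
    discriminate Ei. apply in_seq. lia.
Qed.

Lemma alpha_spec n c j : bij_on n (par c) -> (1 <= j <= n)%nat ->
  (1 <= alpha n c j <= n)%nat /\ par c (alpha n c j) = j.
Proof.
  intros Hc Hj. pose proof Hc as [_ [_ Hsurj]].
  destruct (Hsurj j Hj) as [i [Hi <-]]. rewrite (alpha_par n c i Hc Hi). auto.
Qed.

Lemma rises_alpha n c c' j : bij_on n (par c) -> bij_on n (par c') -> rises n c c' ->
  (1 <= j <= n)%nat -> val c (alpha n c j) <= val c' (alpha n c' j).
Proof.
  intros Hc Hc' Hrise Hj. destruct (alpha_spec n c j Hc Hj) as [Ha Hpar].
  destruct (Hrise _ Ha) as [i' [Hi' [Hpar' Hval]]].
  rewrite Hpar in Hpar'. replace (alpha n c' j) with i'; [exact Hval|].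
  rewrite <- Hpar', alpha_par; auto.
Qed.

Lemma zidx_of n r a : (1 <= a)%nat -> INR a - 1 <= r * INR n < INR a -> zidx n r = a.
Proof.
  intros Ha Hr. unfold zidx.
  assert (Ea : IZR (Z.of_nat (a - 1)) = INR a - 1).
  { rewrite <- INR_IZR_INZ, minus_INR by lia. reflexivity. }
  rewrite <- (Int_part_spec (r * INR n) (Z.of_nat (a - 1))) by lra.
  rewrite Nat2Z.id. lia.
Qed.

Lemma zidx_range n z : (1 <= n)%nat -> 0 <= z < 1 ->
  (1 <= zidx n z <= n)%nat /\ INR (zidx n z) - 1 <= z * INR n < INR (zidx n z).
Proof.
  intros Hn Hz. assert (Hpos : 0 < INR n) by (apply lt_0_INR; lia).
  destruct (base_Int_part (z * INR n)) as [B1 B2].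
  assert (Hlo : 0 <= z * INR n) by (apply Rmult_le_pos; lra).
  assert (Hhi : z * INR n < INR n) by nra.
  set (k := Int_part (z * INR n)) in *.
  assert (Hk0 : (-1 < k)%Z) by (apply lt_IZR; lra).
  assert (Hkn : (k < Z.of_nat n)%Z) by (apply lt_IZR; rewrite <- INR_IZR_INZ; lra).
  assert (E : INR (zidx n z) = IZR k + 1).
  { unfold zidx. fold k. rewrite S_INR, INR_IZR_INZ, Z2Nat.id by lia. reflexivity. }
  rewrite E. split; [unfold zidx; fold k; lia | lra].
Qed.

Lemma zidx_le n z z' : z <= z' -> (zidx n z <= zidx n z')%nat.
Proof.
  intros H. unfold zidx.
  assert (Hle := Int_part_le (z * INR n) (z' * INR n)
                   (Rmult_le_compat_r _ _ _ (pos_INR n) H)).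
  lia.
Qed.

Lemma le_zpos_zidx n z : (1 <= n)%nat -> 0 <= z < 1 -> z <= zpos n (zidx n z).
Proof.
  intros Hn Hz. destruct (zidx_range n z Hn Hz) as [_ [_ H]].
  assert (Hpos : 0 < INR n) by (apply lt_0_INR; lia).
  unfold zpos. apply Rmult_le_reg_r with (INR n); [exact Hpos|].
  unfold Rdiv. rewrite Rmult_assoc, Rinv_l by lra. lra.
Qed.

Lemma zidx_shift n z a : (1 <= n)%nat -> 0 <= z < 1 -> (1 <= a)%nat ->
  zidx n (z - zpos n (zidx n z) + zpos n a) = a.
Proof.
  intros Hn Hz Ha. destruct (zidx_range n z Hn Hz) as [_ H].
  assert (Hpos : 0 < INR n) by (apply lt_0_INR; lia).
  apply zidx_of; [exact Ha|].
  replace ((z - zpos n (zidx n z) + zpos n a) * INR n)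
    with (z * INR n - INR (zidx n z) + INR a) by (unfold zpos; field; lra).
  lra.
Qed.

Lemma tidx_le dt t t' : 0 < dt -> t <= t' -> (tidx dt t <= tidx dt t')%nat.
Proof.
  intros Hdt H. unfold tidx.
  assert (Hle : t / dt <= t' / dt)
    by (apply Rmult_le_compat_r; [left; apply Rinv_0_lt_compat|]; assumption).
  apply Int_part_le in Hle. lia.
Qed.

Section Scheme.
Variables (n : nat) (Th : R -> R -> R -> R) (th0 q0 : nat -> R) (dt : R).
Hypothesis n_pos : (1 <= n)%nat.
Hypothesis Th_mono_w : forall w w' z t, w <= w' -> Th w z t <= Th w' z t.
Hypothesis Th_mono_z : forall w z z' t, z <= z' -> Th w z t <= Th w z' t.
Hypothesis th0_sorted : forall j, (1 <= j)%nat -> (j < n)%nat -> th0 j <= th0 (S j).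

Let c (k : nat) : config := cfg n Th th0 q0 dt k.

Lemma cfg_S k : c (S k) = step n Th (thM th0 q0) (INR (S k) * dt) (c k).
Proof. reflexivity. Qed.

Lemma bij_on_cfg k : bij_on n (par (c k)).
Proof.
  induction k as [|k IH].
  - split; [|split]; simpl; auto. intros j Hj. exists j. auto.
  - rewrite cfg_S. apply bij_on_stages; [exact IH | lia].
Qed.

Lemma sorted_cfg k : sorted_vals n (c k).
Proof.
  induction k as [|k IH]; [exact th0_sorted|].
  rewrite cfg_S. apply sorted_stages; [exact Th_mono_w | exact Th_mono_z | lia | exact IH |].
  intros Hn. lia.
Qed.

Lemma cfg_dry k i : (1 <= i <= n)%nat -> ~ wet n Th (thM th0 q0) (INR (S k) * dt) (c (S k)) i.
Proof. intros Hi. rewrite cfg_S. apply stages_dry; assumption. Qed.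

Lemma rises_cfg k k' : (k <= k')%nat -> rises n (c k) (c k').
Proof.
  induction 1 as [|k' _ IH]; [apply rises_refl|].
  apply (rises_trans _ _ _ _ IH). rewrite cfg_S. apply rises_stages; [exact Th_mono_z | lia].
Qed.

(* [Fn] moves the label [z] of parcel [zidx n z] to the cell that parcel now occupies. *)
Lemma hat_at_parcel t z : 0 <= z < 1 ->
  thetahat n Th th0 q0 dt t z = val (c (tidx dt t)) (alpha n (c (tidx dt t)) (zidx n z)) /\
  qhat n Th th0 q0 dt t z =
    thM th0 q0 (zidx n z) - val (c (tidx dt t)) (alpha n (c (tidx dt t)) (zidx n z)).
Proof.
  intros Hz. destruct (zidx_range n z n_pos Hz) as [Hj _].
  destruct (alpha_spec n _ _ (bij_on_cfg (tidx dt t)) Hj) as [Ha Hpar].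
  unfold thetahat, qhat, thetan, qn, Fn. cbv zeta. fold (c (tidx dt t)).
  rewrite zidx_shift, Hpar by (auto; lia). split; reflexivity.
Qed.

Lemma thetan_nondecreasing t z z' : 0 <= z -> z <= z' -> z' < 1 ->
  thetan n Th th0 q0 dt t z <= thetan n Th th0 q0 dt t z'.
Proof.
  intros Hz Hzz' Hz'. unfold thetan.
  destruct (zidx_range n z n_pos ltac:(lra)) as [Hj _].
  destruct (zidx_range n z' n_pos ltac:(lra)) as [Hj' _].
  apply (sorted_le n _ (sorted_cfg _)); [lia | apply zidx_le, Hzz' | lia].
Qed.

Lemma thetahat_add_qhat t z : 0 <= z < 1 ->
  thetahat n Th th0 q0 dt t z + qhat n Th th0 q0 dt t z = theta0 n th0 z + q0f n q0 z.
Proof.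
  intros Hz. destruct (hat_at_parcel t z Hz) as [-> ->].
  unfold theta0, q0f, thM. ring.
Qed.

Lemma thetahat_nondecreasing z t t' : 0 < dt -> 0 <= z < 1 -> t <= t' ->
  thetahat n Th th0 q0 dt t z <= thetahat n Th th0 q0 dt t' z.
Proof.
  intros Hdt Hz Htt'.
  destruct (hat_at_parcel t z Hz) as [-> _]. destruct (hat_at_parcel t' z Hz) as [-> _].
  apply rises_alpha; [apply bij_on_cfg | apply bij_on_cfg | | apply (zidx_range n z n_pos Hz)].
  apply rises_cfg, tidx_le; assumption.
Qed.

Lemma qn_le_Q (Q : R -> R -> R -> R) t z :
  (forall w z t, Th w z t + Q (Th w z t) z t = w) ->
  (forall z t x y, x <= y -> x + Q x z t <= y + Q y z t) ->
  (forall x z z' t, z <= z' -> Q x z' t <= Q x z t) ->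
  (forall j, (1 <= j <= n)%nat -> q0 j <= Q (th0 j) (zpos n j) 0) ->
  0 <= z < 1 ->
  qn n Th th0 q0 dt t z <= Q (thetan n Th th0 q0 dt t z) z (INR (tidx dt t) * dt).
Proof.
  intros HTh Hsum HQz Hq0 Hz.
  destruct (zidx_range n z n_pos Hz) as [Hj _].
  assert (Hzj := le_zpos_zidx n z n_pos Hz).
  unfold qn, thetan. cbv zeta. fold (c (tidx dt t)). set (j := zidx n z) in *.
  apply Rle_trans with (Q (val (c (tidx dt t)) j) (zpos n j) (INR (tidx dt t) * dt));
    [|apply HQz, Hzj].
  destruct (tidx dt t) as [|k].
  - simpl. rewrite Rmult_0_l. specialize (Hq0 j Hj). unfold thM. lra.
  - (* the position is dry, and [x + Q x] is nondecreasing and equals [theta^M] at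
       the saturated value *)
    pose proof (cfg_dry k j Hj) as Hdry. unfold wet in Hdry.
    pose proof (Hsum (zpos n j) (INR (S k) * dt) _ (val (c (S k)) j)
                  ltac:(apply Rnot_lt_le; exact Hdry)) as H.
    rewrite HTh in H. lra.
Qed.

End Scheme.
Theorem corollary3p3 (Q Th : R -> R -> R -> R) (T : R) (n : nat) (dt : R)
  (th0 q0 : nat -> R) :
  smooth3 Q ->
  (forall x y z, exists d, derivable_pt_lim (fun a => Q a y z) x d /\ 0 < d) ->
  (forall x y z, exists d, derivable_pt_lim (fun a => Q x a z) y d /\ d < 0) ->
  (forall w z t, Th w z t + Q (Th w z t) z t = w) ->
  (forall w z t, exists d, derivable_pt_lim (fun a => Th a z t) w d /\ 0 < d) ->
  (forall w z t, exists d, derivable_pt_lim (fun a => Th w a t) z d /\ 0 < d) ->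
  0 < T -> (1 <= n)%nat -> 0 < dt ->
  (forall j, (1 <= j)%nat -> (j < n)%nat -> th0 j <= th0 (S j)) ->
  (forall j, (1 <= j <= n)%nat -> q0 j <= Q (th0 j) (zpos n j) 0) ->
  (* (i) *)
  (forall t, 0 <= t < T -> forall z z', 0 <= z -> z <= z' -> z' < 1 ->
     thetan n Th th0 q0 dt t z <= thetan n Th th0 q0 dt t z') /\
  (* (ii) *)
  (forall t z, 0 <= t < T -> 0 <= z < 1 ->
     thetahat n Th th0 q0 dt t z + qhat n Th th0 q0 dt t z
     = theta0 n th0 z + q0f n q0 z) /\
  (* (iii) *)
  (forall z, 0 <= z < 1 -> forall t t', 0 <= t -> t <= t' -> t' < T ->
     thetahat n Th th0 q0 dt t z <= thetahat n Th th0 q0 dt t' z) /\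
  (* (iv) *)
  (forall t z, 0 <= t < T -> 0 <= z < 1 ->
     qn n Th th0 q0 dt t z
     <= Q (thetan n Th th0 q0 dt t z) z (INR (tidx dt t) * dt)).
Proof.
  intros _ HQx HQz HTh HThw HThz _ Hn Hdt Hth0 Hq0.
  assert (Th_mono_w : forall w w' z t, w <= w' -> Th w z t <= Th w' z t)
    by (intros w w' z t; exact (nondecreasing_of_pos_derivative _ (fun x => HThw x z t) w w')).
  assert (Th_mono_z : forall w z z' t, z <= z' -> Th w z t <= Th w z' t)
    by (intros w z z' t; exact (nondecreasing_of_pos_derivative _ (fun x => HThz w x t) z z')).
  assert (Q_antitone_z : forall x z z' t, z <= z' -> Q x z' t <= Q x z t)
    by (intros x z z' t; exact (nonincreasing_of_neg_derivative _ (fun y => HQz x y t) z z')).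
  assert (add_Q_mono : forall z t x y, x <= y -> x + Q x z t <= y + Q y z t).
  { intros z t. apply (nondecreasing_of_pos_derivative (fun a => a + Q a z t)).
    intros a. destruct (HQx a z t) as [d [Hd Hpos]]. exists (1 + d). split; [|lra].
    apply (derivable_pt_lim_plus id); [apply derivable_pt_lim_id | exact Hd]. }
  split; [|split; [|split]].
  - intros t _ z z'. apply thetan_nondecreasing; assumption.
  - intros t z _. apply thetahat_add_qhat; assumption.
  - intros z Hz t t' _ Htt' _. apply thetahat_nondecreasing; assumption.
  - intros t z _. apply qn_le_Q; assumption.
Qed.
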